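(* $\mathsf{Seq}\vdash\forall x\,y\,\exists z\,\forall u\,\big[\,\exists v_1v_2[(v_1\vdash u)\circ v_2=z]\;\leftrightarrow\;\big(\exists v_1v_2[(v_1\vdash u)\circ v_2=x]\vee u=y\big)\,\big]$.
   Context: $\mathsf{Seq}$ is the theory in the language $\{e,\vdash,\circ\}$ ($e$ constant, $\vdash$ and $\circ$ binary functions) with axioms: ($\mathsf{Seq}_1$) $\forall xy[x\vdash y\neq e]$; ($\mathsf{Seq}_2$) $\forall x_1x_2y_1y_2[x_1\vdash x_2=y_1\vdash y_2\rightarrow(x_1=y_1\wedge x_2=y_2)]$; ($\mathsf{Seq}_3$) $\forall x[x\circ e=x]$; ($\mathsf{Seq}_4$) $\forall xyz[x\circ(y\vdash z)=(x\circ y)\vdash z]$; ($\mathsf{Seq}_5$) $\forall x[x=e\vee\exists yz[x=y\vdash z]]$. The claimed sentence is the translation of the adjunction axiom $\forall xy\exists z\forall u[u\in z\leftrightarrow(u\in x\vee u=y)]$ under $(x\in y)^\tau=\exists v_1v_2[(v_1\vdash x)\circ v_2=y]$. *)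

Record SeqModel := {
  carrier :> Type;
  e : carrier;
  pre : carrier -> carrier -> carrier;
  comp : carrier -> carrier -> carrier;
  Seq1 : forall x y : carrier, pre x y <> e;
  Seq2 : forall x1 x2 y1 y2 : carrier,
      pre x1 x2 = pre y1 y2 -> x1 = y1 /\ x2 = y2;
  Seq3 : forall x : carrier, comp x e = x;
  Seq4 : forall x y z : carrier, comp x (pre y z) = pre (comp x y) z;
  Seq5 : forall x : carrier, x = e \/ exists y z, x = pre y z
}.

Arguments e {_}.
Arguments pre {_} _ _.
Arguments comp {_} _ _.

(* translation (x \in y)^tau := exists v1 v2, (v1 |- x) o v2 = y *)
Definition mem_tau {M : SeqModel} (x y : M) : Prop :=
  exists v1 v2 : M, comp (pre v1 x) v2 = y.


(* The witness is z := x |- y.  Decomposing v2 by Seq5 as e or a |- b, the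
   equation (v1 |- u) o v2 = x |- y is peeled by Seq3/Seq4 and the injectivity
   of |- (Seq2): either u = y, or (v1 |- u) o a = x. *)

Lemma mem_tau_pre_l (M : SeqModel) (u x y : M) :
  mem_tau u (pre x y) -> mem_tau u x \/ u = y.
Proof.
  intros [v1 [v2 H]].
  destruct (Seq5 M v2) as [-> | [a [b ->]]].
  - rewrite Seq3 in H. right. apply (Seq2 M _ _ _ _ H).
  - rewrite Seq4 in H. left. exists v1, a. apply (Seq2 M _ _ _ _ H).
Qed.

Lemma mem_tau_pre_r (M : SeqModel) (u x y : M) :
  mem_tau u x \/ u = y -> mem_tau u (pre x y).
Proof.
  intros [[v1 [v2 H]] | ->].
  - exists v1, (pre v2 y). rewrite Seq4, H. reflexivity.
  - exists x, e. apply Seq3.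
Qed.

Lemma mem_tau_pre (M : SeqModel) (u x y : M) :
  mem_tau u (pre x y) <-> mem_tau u x \/ u = y.
Proof. split; [apply mem_tau_pre_l | apply mem_tau_pre_r]. Qed.

Theorem lemma4 : forall M : SeqModel, forall x y : M, exists z : M, forall u : M,
  (exists v1 v2 : M, comp (pre v1 u) v2 = z) <->
  ((exists v1 v2 : M, comp (pre v1 u) v2 = x) \/ u = y).
Proof.
  intros M x y. exists (pre x y). intros u. apply mem_tau_pre.
Qed.
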